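(* Let $l$ be a positive integer such that for every $i\in\mathcal{V}$ there exist $l$ matrices in $\mathcal{M}$ (possibly repeated) whose product, in some order, has all entries of its column indexed by $i$ strictly positive. For $k\ge 1$ let $W_k=M_{(k-1)l+1}M_{(k-1)l+2}\cdots M_{kl}$. Then there exist constants $w>0$ and $d<1$ such that, for each $k\ge 1$, with probability equal to $w$ we have $\lambda(W_k)\le d$, and these events are independent for different $k$.
   Context: Let $\mathcal{G}=(\mathcal{V},\mathcal{E})$ be a strongly connected directed graph with $\mathcal{V}=\{1,\dots,m\}$, with a self-loop $(i,i)\in\mathcal{E}$ at every node. Let $\mathcal{O}_i=\{j:(i,j)\in\mathcal{E}\}$ and $D_i=|\mathcal{O}_i|$. At each time step $k\ge1$ each link $(i,j)\in\mathcal{E}$ is reliable with probability $q_{ij}\in(0,1]$, independently across links and across time steps; let $X_k[i,j]=1$ if $(i,j)$ is reliable at step $k$ and $0$ otherwise. Let $n=m+|\mathcal{E}|$ and index rows/columns of $n\times n$ matrices by $\mathcal{V}\cup\mathcal{E}$ (each link $(i,j)$ is an additional ''virtual buffer'' index). The random matrix $M_k$ is defined by: for $i\in\mathcal{V}$ and $(i,j)\in\mathcal{E}$, $M_k[i,j]=X_k[i,j]/D_i$ and $M_k[i,(i,j)]=(1-X_k[i,j])/D_i$, all other entries of row $i$ being $0$; for $(i,j)\in\mathcal{E}$, $M_k[(i,j),j]=X_k[i,j]$ and $M_k[(i,j),(i,j)]=1-X_k[i,j]$, all other entries of row $(i,j)$ being $0$. Each $M_k$ is row stochastic. $\mathcal{M}$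 denotes the finite set of all $2^{|\mathcal{E}|}$ matrices obtainable this way. For a row stochastic matrix $A$, $\lambda(A)=1-\min_{i_1,i_2}\sum_j\min(A[i_1,j],A[i_2,j])$. *)

From HB Require Import structures.
From mathcomp Require Import all_boot all_order all_algebra.
From mathcomp Require Import reals.
Set Implicit Arguments.
Unset Strict Implicit.
Unset Printing Implicit Defensive.
Import Order.TTheory GRing.Theory Num.Theory.
Local Open Scope ring_scope.

Section Defs.
Variables (R : realType) (m : nat) (E : {set 'I_m * 'I_m}).

Definition strongly_connected : Prop :=
  forall i j : 'I_m, connect [rel a b | (a, b) \in E] i j.

Definition edge : finType := {e : 'I_m * 'I_m | e \in E}.

(* row/column indices: V (inl) union E (inr, virtual buffers) *)
Definition idx : finType := ('I_m + edge)%type.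

Definition pattern : finType := {ffun edge -> bool}.

Definition outdeg (i : 'I_m) : nat := #|[set j | (i, j) \in E]|.

Definition Xat (X : pattern) (e : 'I_m * 'I_m) : bool :=
  if insub e is Some e' then X e' else false.

Definition mat := idx -> idx -> R.

Definition Mof (X : pattern) : mat := fun r c =>
  match r, c with
  | inl i, inl j => if (i, j) \in E then (Xat X (i, j))%:R / (outdeg i)%:R else 0
  | inl i, inr e => if (sval e).1 == i then (1 - (X e)%:R) / (outdeg i)%:R else 0
  | inr e, inl j => if (sval e).2 == j then (X e)%:R else 0
  | inr e, inr e' => if e == e' then 1 - (X e)%:R else 0
  end.

Definition mulmat (A B : mat) : mat := fun r c => \sum_(z : idx) A r z * B z c.
Definition idmat : mat := fun r c => (r == c)%:R.
(* product A_1 A_2 ... A_n of the list [:: A_1; ...; A_n] *)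
Definition prodmats (s : seq mat) : mat := foldr mulmat idmat s.

Definition lambda (A : mat) : R :=
  1 - \big[Num.min/1]_(p : idx * idx) \sum_(j : idx) Num.min (A p.1 j) (A p.2 j).

(* probability of a single pattern: links independent, link e reliable w.p. q e *)
Definition pat_prob (q : 'I_m * 'I_m -> R) (X : pattern) : R :=
  \prod_(e : edge) (if X e then q (sval e) else 1 - q (sval e)).

(* trajectories of the first T time steps (X_1, ..., X_T); independent across steps *)
Definition traj (T : nat) : finType := {ffun 'I_T -> pattern}.

Definition traj_prob (q : 'I_m * 'I_m -> R) (T : nat) (om : traj T) : R :=
  \prod_(t : 'I_T) pat_prob q (om t).

Definition Prob (q : 'I_m * 'I_m -> R) (T : nat) (A : pred (traj T)) : R :=
  \sum_(om : traj T | A om) traj_prob q om.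

(* X_t for 1-based time t (t <= T); default pattern outside the horizon *)
Definition at_time (T : nat) (om : traj T) (t : nat) : pattern :=
  if insub t.-1 is Some o then om o else [ffun => true].

Definition Mt (T : nat) (om : traj T) (t : nat) : mat := Mof (at_time om t).

Definition Wk (l T : nat) (om : traj T) (k : nat) : mat :=
  prodmats [seq Mt om t | t <- iota ((k - 1) * l + 1) l].

End Defs.

(* A stochastic matrix whose column c is positive has lambda < 1, since every pair
   of rows overlaps at c.  The all-reliable matrix M* has the largest support one step
   late (a message kept in a buffer is, under M*, already delivered and then waits on
   a self-loop), so if some product of l matrices has a positive column i, so does
   M*^l.  Let d be the largest lambda(W) < 1 over the finitely many outcomes W of a
   block and w the probability that the first block satisfies lambda <= d; w > 0
   because the all-reliable block has positive probability.  Distinct blocks depend on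
   disjoint time steps, which are independent, and each block has the law of the
   first, so the joint probability factorises as w ^ |K|. *)

From HB Require Import structures.
From mathcomp Require Import all_boot all_order all_algebra.
From mathcomp Require Import reals.
From mathcomp Require Import zify.
Import Order.TTheory GRing.Theory Num.Theory.
Local Open Scope ring_scope.
Set Implicit Arguments.
Unset Strict Implicit.
Unset Printing Implicit Defensive.

Lemma bigmax_seq_mem (K : seq nat) : K != [::] -> (\max_(k <- K) k)%N \in K.
Proof.
elim: K => // x [|y K] IH _; first by rewrite big_seq1 mem_head.
by rewrite big_cons; case: leqP => _; rewrite ?mem_head // in_cons IH ?orbT.
Qed.

Section Trajectories.
Variables (R : realType) (m : nat) (E : {set 'I_m * 'I_m}) (q : 'I_m * 'I_m -> R).

Lemma pat_prob_sum1 : \sum_(X : pattern E) pat_prob q X = 1.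
Proof.
rewrite /pat_prob -(bigA_distr_bigA (fun (e : edge E) (b : bool) =>
  if b then q (sval e) else 1 - q (sval e))) /=.
by apply: big1 => e _; rewrite big_bool /= addrC subrK.
Qed.

Lemma traj_prob_sum1 T : \sum_(om : traj E T) traj_prob q om = 1.
Proof.
rewrite /traj_prob -(bigA_distr_bigA (fun (t : 'I_T) (X : pattern E) => pat_prob q X)) /=.
by apply: big1 => t _; rewrite pat_prob_sum1.
Qed.

Lemma eq_Prob T (A B : pred (traj E T)) : A =1 B -> Prob q A = Prob q B.
Proof. exact: eq_bigl. Qed.

Definition traj_take a b (om : traj E (a + b)) : traj E a := [ffun t => om (lshift b t)].
Definition traj_drop a b (om : traj E (a + b)) : traj E b := [ffun t => om (rshift a t)].
Definition traj_cat a b (u : traj E a) (v : traj E b) : traj E (a + b) :=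
  [ffun t => match split t with inl t' => u t' | inr t' => v t' end].

Lemma traj_take_cat a b u v : traj_take (@traj_cat a b u v) = u.
Proof. by apply/ffunP => t; rewrite !ffunE (unsplitK (inl _)). Qed.

Lemma traj_drop_cat a b u v : traj_drop (@traj_cat a b u v) = v.
Proof. by apply/ffunP => t; rewrite !ffunE (unsplitK (inr _)). Qed.

Lemma traj_catK a b om : @traj_cat a b (traj_take om) (traj_drop om) = om.
Proof.
apply/ffunP => t; rewrite !ffunE.
by case: splitP => t' ht; rewrite ffunE; congr (om _); apply: val_inj; rewrite /= ht.
Qed.

Lemma traj_prob_cat a b u v :
  traj_prob q (@traj_cat a b u v) = traj_prob q u * traj_prob q v.
Proof.
rewrite /traj_prob big_split_ord /=.
by congr (_ * _); apply: eq_bigr => t _; rewrite ffunE ?(unsplitK (inl _)) ?(unsplitK (inr _)).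
Qed.

Lemma Prob_take_drop a b (A : pred (traj E a)) (B : pred (traj E b)) :
  Prob q (fun om : traj E (a + b) => A (traj_take om) && B (traj_drop om)) =
  Prob q A * Prob q B.
Proof.
rewrite /Prob (reindex (fun p : traj E a * traj E b => traj_cat p.1 p.2)) /=; last first.
  exists (fun om => (traj_take om, traj_drop om)) => [[u v] _|om _];
    by rewrite /= ?traj_take_cat ?traj_drop_cat ?traj_catK.
rewrite (eq_bigl (fun p => A p.1 && B p.2)) => [|p]; last first.
  by rewrite traj_take_cat traj_drop_cat.
rewrite -(pair_big A B (fun u v => traj_prob q (traj_cat u v))) big_distrl /=.
apply: eq_bigr => u _; rewrite big_distrr /=.
by apply: eq_bigr => v _; rewrite traj_prob_cat.
Qed.

Lemma Prob_take a b (A : pred (traj E a)) :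
  Prob q (fun om : traj E (a + b) => A (traj_take om)) = Prob q A.
Proof.
rewrite -[RHS]mulr1 -(traj_prob_sum1 b) -(Prob_take_drop A predT).
by apply: eq_Prob => om; rewrite andbT.
Qed.

Lemma at_timeE T (om : traj E T) (t : 'I_T) : at_time om t.+1 = om t.
Proof. by rewrite /at_time /=; case: insubP => [t' _ /val_inj->|] //; rewrite ltn_ord. Qed.

Lemma at_time_take a b (om : traj E (a + b)) t : (0 < t <= a)%N ->
  at_time om t = at_time (traj_take om) t.
Proof.
case: t => // t /= lt_ta.
rewrite (at_timeE (traj_take om) (Ordinal lt_ta)) ffunE.
exact: (at_timeE om (lshift b (Ordinal lt_ta))).
Qed.

Lemma at_time_drop a b (om : traj E (a + b)) t : (0 < t <= b)%N ->
  at_time om (a + t) = at_time (traj_drop om) t.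
Proof.
case: t => // t /= lt_tb.
rewrite (at_timeE (traj_drop om) (Ordinal lt_tb)) ffunE addnS.
exact: (at_timeE om (rshift a (Ordinal lt_tb))).
Qed.

Lemma Wk_take l a b (om : traj E (a + b)) k : (1 <= k)%N -> (k * l <= a)%N ->
  Wk R l om k = Wk R l (traj_take om) k.
Proof.
move=> k_ge1 kl_le_a; rewrite /Wk; congr prodmats; apply/eq_in_map => t.
by rewrite mem_iota => t_range; rewrite /Mt at_time_take //; nia.
Qed.

Lemma Wk_drop l a b (om : traj E (a + b)) k : (1 <= k)%N -> a = ((k - 1) * l)%N ->
  (l <= b)%N -> Wk R l om k = Wk R l (traj_drop om) 1.
Proof.
move=> k_ge1 def_a l_le_b; rewrite /Wk -def_a subnn mul0n add0n iotaDl -map_comp.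
congr prodmats; apply/eq_in_map => t; rewrite mem_iota => t_range /=.
by rewrite /Mt at_time_drop //; lia.
Qed.

End Trajectories.

Section Blocks.
Variables (R : realType) (m : nat) (E : {set 'I_m * 'I_m}) (q : 'I_m * 'I_m -> R).
Variables (l : nat) (d : R).

Definition block_contracts T (om : traj E T) k : bool := lambda (Wk R l om k) <= d.

Definition blocks_within T (K : seq nat) : Prop :=
  forall k, k \in K -> (1 <= k)%N && (k * l <= T)%N.

Lemma Prob_blocks_rem a b K k0 : k0 \in K -> (1 <= k0)%N -> a = ((k0 - 1) * l)%N ->
    (l <= b)%N -> blocks_within a (rem k0 K) ->
  Prob q (fun om : traj E (a + b) => all (block_contracts om) K) =
  Prob q (fun u : traj E a => all (block_contracts u) (rem k0 K)) *
  Prob q (fun v : traj E l => block_contracts v 1).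
Proof.
move=> k0_K k0_ge1 def_a l_le_b within_a.
have [c ->] : exists c, b = (l + c)%N by exists (b - l)%N; rewrite subnKC.
rewrite -[X in _ * X](Prob_take q c) -Prob_take_drop; apply: eq_Prob => om.
rewrite (perm_all _ (perm_to_rem k0_K)) /= andbC; congr andb.
  apply: eq_in_all => k /within_a /andP[k_ge1 kl_le_a].
  by rewrite /block_contracts (Wk_take R om k_ge1 kl_le_a).
rewrite /block_contracts (Wk_drop R om k0_ge1 def_a) ?leq_addr //.
by rewrite (Wk_take R (l := l) (traj_drop om) (leqnn 1)) ?mul1n.
Qed.

Lemma Prob_blocks T K : uniq K -> blocks_within T K ->
  Prob q (fun om : traj E T => all (block_contracts om) K) =
  Prob q (fun v : traj E l => block_contracts v 1) ^+ size K.
Proof.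
move: {2}(size K) (erefl (size K)) => n.
elim: n T K => [|n IH] T K size_K uniq_K within_T.
  by move/size0nil: size_K => ->; rewrite expr0 -(traj_prob_sum1 E q T); apply: eq_Prob.
set k0 := (\max_(k <- K) k)%N; set a := ((k0 - 1) * l)%N.
have k0_K : k0 \in K by apply: bigmax_seq_mem; case: (K) size_K.
have /andP[k0_ge1 k0l_le_T] := within_T _ k0_K.
have in_rem k : k \in rem k0 K -> (k \in K) && (k < k0)%N.
  rewrite mem_rem_uniq // inE => /andP[k_neq k_K].
  by rewrite k_K ltn_neqAle k_neq; apply: leq_bigmax_seq.
have within_a : blocks_within a (rem k0 K).
  move=> k /in_rem /andP[/within_T /andP[k_ge1 _] k_lt_k0].
  by rewrite k_ge1 /a leq_mul2r; apply/orP; right; lia.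
have [b def_T] : exists b, T = (a + b)%N by exists (T - a)%N; rewrite subnKC //; nia.
have l_le_b : (l <= b)%N by nia.
have size_rem_K : size (rem k0 K) = n by rewrite size_rem // size_K.
subst T; rewrite (Prob_blocks_rem k0_K) // (IH a (rem k0 K)) ?rem_uniq //.
by rewrite size_rem_K size_K exprSr.
Qed.

End Blocks.

Section Matrices.
Variables (R : realType) (m : nat) (E : {set 'I_m * 'I_m}).

Definition mat_nonneg (A : mat R E) : Prop := forall r c, 0 <= A r c.

Lemma Mof_ge0 X : mat_nonneg (Mof R X).
Proof.
by move=> [i|e] [j|e'] /=; case: ifP => // _; rewrite ?divr_ge0 // subr_ge0 lern1 leq_b1.
Qed.

Lemma mulmat_ge0 A B : mat_nonneg A -> mat_nonneg B -> mat_nonneg (mulmat A B).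
Proof. by move=> A_ge0 B_ge0 r c; apply: sumr_ge0 => z _; rewrite mulr_ge0. Qed.

Lemma prodmats_Mof_ge0 (s : seq (pattern E)) : mat_nonneg (prodmats [seq Mof R X | X <- s]).
Proof.
elim: s => [|X s IH] /=; first by move=> r c; rewrite ler0n.
exact/mulmat_ge0/IH/Mof_ge0.
Qed.

Lemma mulmat_gt0P A B r c : mat_nonneg A -> mat_nonneg B ->
  0 < mulmat A B r c <-> exists z, 0 < A r z /\ 0 < B z c.
Proof.
move=> A_ge0 B_ge0; split=> [AB_gt0|[z [Az_gt0 Bz_gt0]]].
  have /psumr_neq0P[z _|z /andP[_]] : mulmat A B r c <> 0 by apply/eqP; rewrite gt_eqF.
    by rewrite mulr_ge0.
  rewrite lt0r mulf_eq0 negb_or => /andP[/andP[Az_neq0 Bz_neq0] _].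
  by exists z; rewrite !lt0r Az_neq0 Bz_neq0 A_ge0 B_ge0.
rewrite /mulmat (bigD1 z) //= ltr_wpDr ?mulr_gt0 //.
by apply: sumr_ge0 => y _; rewrite mulr_ge0.
Qed.

Lemma lambda_lt1 (A : mat R E) c : mat_nonneg A -> (forall r, 0 < A r c) -> lambda A < 1.
Proof.
move=> A_ge0 col_gt0; rewrite /lambda ltrBlDr ltrDl.
apply: (big_ind (fun x => 0 < x)) => // [x y x_gt0 y_gt0|p _]; first by rewrite lt_min x_gt0.
rewrite (bigD1 c) //= ltr_wpDr ?lt_min ?col_gt0 //.
by apply: sumr_ge0 => j _; rewrite le_min !A_ge0.
Qed.

End Matrices.

Section ReliableMatrix.
Variables (R : realType) (m : nat) (E : {set 'I_m * 'I_m}).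

Definition all_reliable : pattern E := [ffun => true].
Definition Mreliable : mat R E := Mof R all_reliable.

Lemma Mreliable_link j k : (j, k) \in E -> 0 < Mreliable (inl j) (inl k).
Proof.
move=> jk_E; rewrite /Mreliable /= jk_E /Xat insubT /= ffunE mul1r invr_gt0 ltr0n.
by rewrite /outdeg card_gt0; apply/set0Pn; exists k; rewrite inE.
Qed.

Lemma Mreliable_delivers (e : edge E) : 0 < Mreliable (inr e) (inl (sval e).2).
Proof. by rewrite /Mreliable /= eqxx ffunE. Qed.

Lemma Mreliable_buffer (e e' : edge E) : Mreliable (inr e) (inr e') = 0.
Proof. by rewrite /Mreliable /= ffunE subrr; case: ifP. Qed.

Lemma prodmats_Mreliable_ge0 n : mat_nonneg (prodmats (nseq n Mreliable)).
Proof. by rewrite /Mreliable -map_nseq; apply: prodmats_Mof_ge0. Qed.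

Variable i : 'I_m.
Hypothesis loop_i : (i, i) \in E.

(* A walk of length n from r to i in the support graph of Mreliable. *)
Definition reaches n r : Prop := 0 < prodmats (nseq n Mreliable) r (inl i).

Lemma reaches0 r : reaches 0 r -> r = inl i.
Proof. by rewrite /reaches /= /idmat; case: eqP => // _; rewrite ltxx. Qed.

Lemma reachesS n r : reaches n.+1 r <-> exists z, 0 < Mreliable r z /\ reaches n z.
Proof. exact/mulmat_gt0P/prodmats_Mreliable_ge0/Mof_ge0. Qed.

Lemma reaches_succ n r : reaches n r -> reaches n.+1 r.
Proof.
elim: n r => [|n IH] r.
  move/reaches0 => ->; apply/reachesS; exists (inl i); split; first exact: Mreliable_link.
  by rewrite /reaches /= /idmat eqxx ltr01.
by move/reachesS => [z [rz z_reaches]]; apply/reachesS; exists z; split; last exact: IH.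
Qed.

(* Mreliable dominates every pattern one step late: a message kept in the buffer
   of link (j, k) is, under full reliability, already delivered to k, which then
   waits on its self-loop. *)
Lemma reaches_Mof X n r c : 0 < Mof R X r c -> reaches n c -> reaches n.+1 r.
Proof.
case: r c => [j|e] [k|e'] /=; case: ifP => [|_]; rewrite ?ltxx // => rc _ c_reaches.
- by apply/reachesS; exists (inl k); split; first exact: Mreliable_link.
- case: n c_reaches => [/reaches0 //|n /reachesS [[k'|e0] [e'z z_reaches]]].
    move: e'z; rewrite /Mreliable /=; case: eqP => [def_k' _|]; last by rewrite ltxx.
    apply/reaches_succ/reachesS; exists (inl k'); split => //; apply: Mreliable_link.
    by rewrite -(eqP rc) -def_k' -surjective_pairing (valP e').
  by rewrite Mreliable_buffer ltxx in e'z.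
- by apply/reachesS; exists (inl k); split; rewrite // -(eqP rc); exact: Mreliable_delivers.
- by move/eqP: rc c_reaches => ->; exact: reaches_succ.
Qed.

Lemma reaches_prodmats (s : seq (pattern E)) r :
  0 < prodmats [seq Mof R X | X <- s] r (inl i) -> reaches (size s) r.
Proof.
elim: s r => [|X s IH] r /=.
  by rewrite /idmat; case: eqP => [->|]; rewrite ?ltxx // /reaches /= /idmat eqxx.
case/mulmat_gt0P => [||z [rz /IH z_reaches]]; first exact: Mof_ge0.
  exact: prodmats_Mof_ge0.
exact: reaches_Mof rz z_reaches.
Qed.

End ReliableMatrix.

Lemma Wk_all_reliable (R : realType) m (E : {set 'I_m * 'I_m}) l T k :
  Wk R l ([ffun => all_reliable E] : traj E T) k = prodmats (nseq l (@Mreliable R m E)).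
Proof.
rewrite /Wk; move: (iota _ _) (size_iota ((k - 1) * l + 1) l) => ts <-.
elim: ts => //= t ts ->; congr (mulmat _ _).
by rewrite /Mt /at_time; case: insub => [t'|]; rewrite ?ffunE.
Qed.

Section Positivity.
Variables (R : realType) (m : nat) (E : {set 'I_m * 'I_m}) (q : 'I_m * 'I_m -> R).
Hypothesis q_range : forall e, e \in E -> 0 < q e <= 1.

Lemma traj_prob_ge0 T (om : traj E T) : 0 <= traj_prob q om.
Proof.
apply: prodr_ge0 => t _; apply: prodr_ge0 => e _.
by have /andP[q_gt0 q_le1] := q_range (valP e); case: ifP; rewrite ?subr_ge0 // ltW.
Qed.

Lemma traj_prob_all_reliable_gt0 T : 0 < traj_prob q ([ffun => all_reliable E] : traj E T).
Proof.
apply: prodr_gt0 => t _; rewrite ffunE; apply: prodr_gt0 => e _; rewrite ffunE.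
by have /andP[] := q_range (valP e).
Qed.

Lemma traj_prob_le_Prob T (A : pred (traj E T)) om : A om -> traj_prob q om <= Prob q A.
Proof.
move=> A_om; rewrite /Prob (bigD1 om) //= lerDl.
by apply: sumr_ge0 => ? _; apply: traj_prob_ge0.
Qed.

End Positivity.

Theorem lemma1 (R : realType) (m : nat) (E : {set 'I_m * 'I_m})
    (q : 'I_m * 'I_m -> R) (l : nat) :
  (0 < m)%N ->
  (forall i : 'I_m, (i, i) \in E) ->
  strongly_connected E ->
  (forall e, e \in E -> 0 < q e <= 1) ->
  (0 < l)%N ->
  (forall i : 'I_m, exists s : seq (pattern E),
      size s = l /\
      forall r : idx E, 0 < prodmats [seq Mof R X | X <- s] r (inl i)) ->
  exists w d : R, 0 < w /\ d < 1 /\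
    forall (T : nat) (K : seq nat),
      uniq K ->
      (forall k, k \in K -> (1 <= k)%N && (k * l <= T)%N) ->
      Prob q (fun om : traj E T => all (fun k => lambda (Wk R l om k) <= d) K)
        = w ^+ size K.
Proof.
move=> m_gt0 loops _ q_range _ col_pos.
pose i0 : 'I_m := Ordinal m_gt0.
pose u : traj E l := [ffun => all_reliable E].
have lambda_u_lt1 : lambda (Wk R l u 1) < 1.
  have [s [size_s s_col_pos]] := col_pos i0.
  rewrite Wk_all_reliable; apply: (lambda_lt1 (c := inl i0)) => [|r].
    exact: prodmats_Mreliable_ge0.
  by rewrite -size_s; apply: reaches_prodmats (s_col_pos r).
pose d := \big[Num.max/0]_(v : traj E l | lambda (Wk R l v 1) < 1) lambda (Wk R l v 1).
exists (Prob q (fun v : traj E l => block_contracts l d v 1)), d.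
split; [|split].
- apply: lt_le_trans (traj_prob_all_reliable_gt0 q_range l) _.
  by apply: traj_prob_le_Prob => //; apply: le_bigmax_cond.
- by apply: bigmax_lt.
- by move=> T K; apply: Prob_blocks.
Qed.
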